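(* Let $S\le T_n$ be a transformation monoid and $G$ the normalizer of $S$ in $S_n$. If $a\in S$ is $\mathcal H$-related in $SG$ to an idempotent $e$ of $SG$, then $e\in S$ and $a$ is $\mathcal H$-related in $S$ to $e$.
   Context: A transformation monoid is a subsemigroup of $T_n$ containing the identity map; $G=\{g\in S_n:g^{-1}Sg=S\}$ and $SG=\{sg:s\in S,g\in G\}$, a semigroup. In a semigroup $U$ (with $U^1$ denoting $U$ with an identity adjoined), $a\,\mathcal R\,b$ if $a=bu$, $b=av$ for some $u,v\in U^1$; $a\,\mathcal L\,b$ if $a=ub$, $b=va$ for some $u,v\in U^1$; and $a\,\mathcal H\,b$ if both $a\,\mathcal R\,b$ and $a\,\mathcal L\,b$. *)

From HB Require Import structures.
From mathcomp Require Import all_boot all_fingroup.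
Set Implicit Arguments. Unset Strict Implicit. Unset Printing Implicit Defensive.

Notation trans n := {ffun 'I_n -> 'I_n}.

(* Product in T_n, composing left to right (maps act on the right):
   x (f g) = (x f) g. *)
Definition tmul n (f g : trans n) : trans n := [ffun x => g (f x)].

Definition tid n : trans n := [ffun x => x].

Definition is_tmonoid n (S : {set trans n}) : Prop :=
  tid n \in S /\ (forall a b, a \in S -> b \in S -> tmul a b \in S).

Definition pfun n (g : {perm 'I_n}) : trans n := [ffun x => g x].

Definition normalizerT n (S : {set trans n}) : {set {perm 'I_n}} :=
  [set g | [set tmul (tmul (pfun g^-1) s) (pfun g) | s in S] == S].

Definition prodSG n (S : {set trans n}) : {set trans n} :=
  [set tmul s (pfun g) | s in S, g in normalizerT S].

(* Green's relations in the semigroup U (with U^1 = U plus an adjoined identity). *)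
Definition Rrel n (U : {set trans n}) (a b : trans n) : Prop :=
  (a = b \/ exists2 u, u \in U & a = tmul b u) /\
  (b = a \/ exists2 v, v \in U & b = tmul a v).

Definition Lrel n (U : {set trans n}) (a b : trans n) : Prop :=
  (a = b \/ exists2 u, u \in U & a = tmul u b) /\
  (b = a \/ exists2 v, v \in U & b = tmul v a).

Definition Hrel n (U : {set trans n}) (a b : trans n) : Prop :=
  Rrel U a b /\ Lrel U a b.

(* In SG the H-class of the idempotent e is a group with identity e, so the
   powers of a, read as e a^k, are cancellable.  Finiteness of T_n yields a
   period d > 0 with e a^d = e; hence e = a^d lies in S, and a^(d-1) (with
   a^0 = e) is an inverse of a that also lies in S, which witnesses that a and
   e are H-related already in S. *)
From mathcomp Require Import all_boot all_fingroup.

Set Implicit Arguments.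
Unset Strict Implicit.
Unset Printing Implicit Defensive.

Lemma tmulA n (f g h : trans n) : tmul (tmul f g) h = tmul f (tmul g h).
Proof. by apply/ffunP => x; rewrite !ffunE. Qed.

Lemma nat_fun_collision (T : finType) (f : nat -> T) :
  exists i j, i < j /\ f i = f j.
Proof.
have : ~~ injectiveb (fun i : 'I_#|T|.+1 => f i).
  apply/injectiveP => /leq_card; by rewrite card_ord ltnn.
move/injectivePn => [i [j neq_ij fij]].
case: (ltngtP i j) => [lt_ij | lt_ji | eq_ij].
- by exists i, j.
- by exists j, i.
- by move: neq_ij; rewrite -val_eqE /= eq_ij eqxx.
Qed.

Section GreenIdempotent.

Variables (n : nat) (U : {set trans n}) (a e : trans n).
Hypothesis ee : tmul e e = e.

Lemma Rrel_idem_mull : Rrel U a e -> tmul e a = a.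
Proof. by case=> [[-> | [u _ ->]] _] //; rewrite -tmulA ee. Qed.

Lemma Lrel_idem_mulr : Lrel U a e -> tmul a e = a.
Proof. by case=> [[-> | [u _ ->]] _] //; rewrite tmulA ee. Qed.

Lemma Rrel_idem_right_inverse : Rrel U a e -> exists v, tmul a v = e.
Proof. by case=> _ [<- | [v _ ->]]; [exists e | exists v]. Qed.

End GreenIdempotent.

Definition tpow n (e a : trans n) (k : nat) : trans n :=
  iter k (fun x => tmul x a) e.

Section PowersInGroup.

Variables (n : nat) (a e v : trans n).
Hypotheses (ee : tmul e e = e) (ea : tmul e a = a) (ae : tmul a e = a).
Hypothesis av : tmul a v = e.

Local Notation pw := (tpow e a).

Lemma tpow1 : pw 1 = a.
Proof. exact: ea. Qed.

Lemma tpowSl k : pw k.+1 = tmul a (pw k).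
Proof.
elim: k => [|k IHk]; first by rewrite tpow1 /= ae.
have -> : pw k.+2 = tmul (pw k.+1) a by [].
by rewrite {1}IHk tmulA.
Qed.

Lemma tpow_mulr_idem k : tmul (pw k) e = pw k.
Proof. by case: k => [|k] //=; rewrite tmulA ae. Qed.

Lemma tpowS_mulr_inv k : tmul (pw k.+1) v = pw k.
Proof.
have -> : pw k.+1 = tmul (pw k) a by [].
by rewrite tmulA av tpow_mulr_idem.
Qed.

Lemma tpowS_inj k j : pw k.+1 = pw j.+1 -> pw k = pw j.
Proof. by move=> eq_kj; rewrite -tpowS_mulr_inv eq_kj tpowS_mulr_inv. Qed.

Lemma tpow_period : exists2 d, 0 < d & pw d = e.
Proof.
have [i [j [lt_ij eq_ij]]] := nat_fun_collision pw.
exists (j - i); first by rewrite subn_gt0.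
suff shift : forall m d, pw (m + d) = pw m -> pw d = e.
  by apply: (shift i); rewrite subnKC; [apply: esym | apply: ltnW].
elim=> [|m IHm] d eq_md; first exact: eq_md.
exact/IHm/tpowS_inj.
Qed.

Lemma tpow_in (S : {set trans n}) k :
  is_tmonoid S -> a \in S -> 0 < k -> pw k \in S.
Proof.
move=> [_ mulS] aS; elim: k => [|[|k] IHk] // _.
  by rewrite tpow1.
exact: mulS (IHk isT) aS.
Qed.

End PowersInGroup.

Lemma Hrel_of_inverse n (S : {set trans n}) (a b e : trans n) :
  a \in S -> b \in S -> tmul e a = a -> tmul a e = a ->
  tmul a b = e -> tmul b a = e -> Hrel S a e.
Proof.
move=> aS bS ea ae ab ba; split; split; right.
- by exists a.
- by exists b.
- by exists a.
- by exists b.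
Qed.

Theorem lemma4p4 (n : nat) (S : {set trans n}) (a e : trans n) :
  is_tmonoid S ->
  a \in S ->
  e \in prodSG S -> tmul e e = e ->
  Hrel (prodSG S) a e ->
  e \in S /\ Hrel S a e.
Proof.
move=> monS aS _ ee [aRe aLe].
have ea := Rrel_idem_mull ee aRe.
have ae := Lrel_idem_mulr ee aLe.
have [v av] := Rrel_idem_right_inverse ee aRe.
have [[|d] // _ de] := tpow_period ee ae av.
have eS : e \in S by rewrite -de; apply: tpow_in.
have bS : tpow e a d \in S.
  by case: d de => [|d] _ //; apply: tpow_in.
split=> //; apply: (Hrel_of_inverse aS bS ea ae).
- by rewrite -tpowSl.
- exact: de.
Qed.
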